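(* Let $n\ge1$ and, for each $i=1,\dots,n$, let $m_i\ge1$, let $SCR_{i1},\dots,SCR_{im_i}\ge0$ be real numbers and let $P_i=(\rho_{iy,iw})_{y,w=1}^{m_i}$ be a correlation matrix. Let $(\rho_{i,w})_{i,w=1}^n$ be a correlation matrix. Define $$SCR_i=\sqrt{\sum_{x=1}^{m_i}\sum_{y=1}^{m_i} SCR_{ix}SCR_{iy}\rho_{ix,iy}},\qquad BSCR=\sqrt{\sum_{i=1}^n\sum_{w=1}^n SCR_iSCR_w\rho_{i,w}},$$ so that $BSCR$ is a function of all $SCR_{iy}$, and assume $SCR_i>0$ for all $i$ and $BSCR>0$. Set $AR_i=\frac{\sum_{j=1}^n SCR_j\rho_{i,j}}{BSCR}$ and $AR_{iy}=\frac{\sum_{w=1}^{m_i} SCR_{iw}\rho_{iy,iw}}{SCR_i}$, and $SCR_{iy}^{Ai}=SCR_{iy}\cdot AR_{iy}$. Then the Euler allocation of $BSCR$ among all sub-risks, $SCR_{iy}^A:=SCR_{iy}\cdot\frac{\partial BSCR}{\partial SCR_{iy}}$, is uniquely determined and satisfies $$BSCR=\sum_{i=1}^n\sum_{y=1}^{m_i}SCR_{iy}^A=\sum_{i=1}^n\sum_{y=1}^{m_i}SCR_{iy}\cdot AR_{iy}\cdot AR_i=\sum_{i=1}^n\sum_{y=1}^{m_i}SCR_{iy}^{Ai}\cdot AR_i,$$ i.e. $SCR_{iy}^A=SCR_{iy}\cdot\frac{\sum_{w=1}^{m_i}SCR_{iw}\rho_{iy,iw}}{SCR_i}\cdot AR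_i$.
   Context: This is the two-level Solvency II Standard Formula aggregation: sub-risk capital requirements $SCR_{iy}$ are aggregated into risk-module requirements $SCR_i$, which are aggregated into the Basic Solvency Capital Requirement $BSCR$, with regulator-given correlation coefficients. A correlation matrix means a symmetric positive semidefinite real matrix with unit diagonal. The Euler allocation principle: for a function $f$ positively homogeneous of degree one, $f(x)=\sum_k x_k\,\partial f/\partial x_k$, and the $k$-th term is the amount allocated to component $k$. *)

From HB Require Import structures.
From mathcomp Require Import all_boot all_order all_algebra.
From mathcomp Require Import all_classical all_reals all_analysis.
Set Implicit Arguments. Unset Strict Implicit. Unset Printing Implicit Defensive.
Import Order.TTheory GRing.Theory Num.Theory.
Local Open Scope ring_scope.

Definition correlation_matrix (R : realType) (k : nat) (A : 'M[R]_k) : Prop :=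
  [/\ A^T = A,
      (forall v : 'rV[R]_k, 0 <= (v *m A *m v^T) 0 0)
    & forall i : 'I_k, A i i = 1].

Definition sf_aggr (R : realType) (k : nat) (A : 'M[R]_k) (v : 'I_k -> R) : R :=
  Num.sqrt (\sum_(x < k) \sum_(y < k) v x * v y * A x y).

Definition SCR_mod (R : realType) (n : nat) (m : 'I_n -> nat)
  (P : forall i : 'I_n, 'M[R]_(m i)) (scr : forall i : 'I_n, 'I_(m i) -> R)
  (i : 'I_n) : R := sf_aggr (P i) (scr i).

Definition BSCR (R : realType) (n : nat) (m : 'I_n -> nat)
  (P : forall i : 'I_n, 'M[R]_(m i)) (Q : 'M[R]_n)
  (scr : forall i : 'I_n, 'I_(m i) -> R) : R :=
  sf_aggr Q (SCR_mod P scr).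

Definition upd (n : nat) (m : 'I_n -> nat) (T : Type)
  (scr : forall i : 'I_n, 'I_(m i) -> T) (i : 'I_n) (y : 'I_(m i)) (t : T)
  : forall j : 'I_n, 'I_(m j) -> T :=
  fun j z => if Tagged (fun j => 'I_(m j)) z == Tagged (fun j => 'I_(m j)) y
             then t else scr j z.

Definition dBSCR (R : realType) (n : nat) (m : 'I_n -> nat)
  (P : forall i : 'I_n, 'M[R]_(m i)) (Q : 'M[R]_n)
  (scr : forall i : 'I_n, 'I_(m i) -> R) (i : 'I_n) (y : 'I_(m i)) : R :=
  derive1 (fun t : R => BSCR P Q (upd scr y t)) (scr i y).

From HB Require Import structures.
From mathcomp Require Import all_boot all_order all_algebra.
From mathcomp Require Import all_classical all_reals all_analysis.
Import Order.TTheory GRing.Theory Num.Theory.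
Local Open Scope ring_scope.

(* For a symmetric matrix A, the aggregate sqrt(v^T A v) has partial
   derivatives (A v)_a / sqrt(v^T A v), and since it is homogeneous of degree
   one, sum_a v_a (A v)_a / sqrt(v^T A v) = sqrt(v^T A v).  By the chain rule
   the derivative of BSCR in SCR_iy is the product AR_iy * AR_i of the two
   marginal rates, and the Euler identity applied at the module level and then
   at the top level yields the decomposition of BSCR. *)

Definition sf_marg {R : realType} {k : nat} (A : 'M[R]_k) (v : 'I_k -> R)
  (a : 'I_k) : R :=
  (\sum_(b < k) v b * A a b) / sf_aggr A v.

Section Aggregation.
Context {R : realType} {k : nat} {A : 'M[R]_k}.

Lemma sqr_sf_aggr {v : 'I_k -> R} : 0 < sf_aggr A v ->
  sf_aggr A v ^+ 2 = \sum_(a < k) \sum_(b < k) v a * v b * A a b.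
Proof. by rewrite sqrtr_gt0 => /ltW; apply: sqr_sqrtr. Qed.

Lemma sf_aggr_euler {v : 'I_k -> R} : 0 < sf_aggr A v ->
  \sum_(a < k) v a * sf_marg A v a = sf_aggr A v.
Proof.
move=> pos; rewrite /sf_marg.
under eq_bigr do rewrite mulrA.
rewrite -mulr_suml.
have -> : \sum_(a < k) v a * \sum_(b < k) v b * A a b = sf_aggr A v ^+ 2.
  rewrite sqr_sf_aggr //; apply: eq_bigr => a _.
  by rewrite mulr_sumr; under eq_bigr do rewrite mulrA.
by rewrite expr2 mulfK // gt_eqF.
Qed.

Hypothesis A_sym : A^T = A.

Lemma sum_quad_polar (u v : 'I_k -> R) :
  \sum_(a < k) \sum_(b < k) (u a * v b + v a * u b) * A a b
  = 2 * \sum_(a < k) u a * \sum_(b < k) v b * A a b.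
Proof.
have A_swap a b : A b a = A a b by rewrite -[in LHS]A_sym mxE.
under eq_bigr do rewrite (eq_bigr _ (fun b _ => mulrDl _ _ _)) big_split.
rewrite big_split /= [X in _ + X]exchange_big /=.
under [X in _ + X]eq_bigr do under eq_bigr do rewrite A_swap (mulrC (v _)).
rewrite -mulr2n mulr_natl; congr (_ *+ 2); apply: eq_bigr => a _.
by rewrite mulr_sumr; apply: eq_bigr => b _; rewrite mulrA.
Qed.

Lemma is_derive_sf_aggr {w : R -> 'I_k -> R} {dw : 'I_k -> R} {x : R} :
  (forall a, is_derive x 1 (w ^~ a) (dw a)) -> 0 < sf_aggr A (w x) ->
  is_derive x 1 (fun t => sf_aggr A (w t)) (\sum_(a < k) dw a * sf_marg A (w x) a).
Proof.
move=> dw_a pos.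
have dquad : is_derive x 1 (fun t => \sum_(a < k) \sum_(b < k) w t a * w t b * A a b)
    (2 * \sum_(a < k) dw a * \sum_(b < k) w x b * A a b).
  rewrite -sum_quad_polar -fct_sumE; apply: is_derive_sum => a.
  rewrite -fct_sumE; apply: is_derive_sum => b.
  have := is_deriveM (is_deriveM (dw_a a) (dw_a b)) (is_derive_cst (A a b) x 1).
  move/is_derive_eq; apply.
  by rewrite scaler0 add0r [LHS]mulrC addrC [dw a * _]mulrC.
have qpos : 0 < \sum_(a < k) \sum_(b < k) w x a * w x b * A a b by rewrite -sqrtr_gt0.
have := is_derive1_comp (is_derive1_sqrt qpos) dquad; move/is_derive_eq; apply.
rewrite -/(sf_aggr A (w x)) invfM mulrACA mulVf ?pnatr_eq0 // mul1r mulrC mulr_suml.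
by under eq_bigr do rewrite -mulrA.
Qed.

Lemma is_derive_sf_aggr_coord {w : R -> 'I_k -> R} {y : 'I_k} {c x : R} :
  (forall a, is_derive x 1 (w ^~ a) (if a == y then c else 0)) ->
  0 < sf_aggr A (w x) ->
  is_derive x 1 (fun t => sf_aggr A (w t)) (c * sf_marg A (w x) y).
Proof.
move=> dw_a pos; apply: is_derive_eq; first exact: is_derive_sf_aggr dw_a pos.
under eq_bigr do rewrite (fun_if (fun u => u * _)) mul0r.
by rewrite -big_mkcond big_pred1_eq.
Qed.

End Aggregation.

Section Update.
Context {R : realType} {n : nat} {m : 'I_n -> nat}
  (scr : forall i : 'I_n, 'I_(m i) -> R) {i : 'I_n} (y : 'I_(m i)).

Lemma upd_id : upd scr y (scr i y) = scr.
Proof.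
apply: functional_extensionality_dep => j; apply/funext => z.
rewrite /upd; case: eqP => [E|//].
by have := congr1 (fun p : {j : 'I_n & 'I_(m j)} => scr (tag p) (tagged p)) E.
Qed.

Lemma upd_block (t : R) (z : 'I_(m i)) :
  upd scr y t z = if z == y then t else scr i z.
Proof. by rewrite /upd eq_Tagged. Qed.

Lemma upd_other_block (t : R) (j : 'I_n) : j != i -> upd scr y t (j := j) = scr j.
Proof.
move=> ji; apply/funext => z; rewrite /upd; case: eqP => [E|//].
by move: E => /(congr1 tag) /= E; rewrite E eqxx in ji.
Qed.

Lemma is_derive_upd (z : 'I_(m i)) :
  is_derive (scr i y) 1 (fun t => upd scr y t z) (if z == y then 1 else 0).
Proof.
under eq_fun do rewrite upd_block.
by case: eqP => _; [exact: is_derive_id | exact: is_derive_cst].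
Qed.

End Update.

Section Derivative.
Context {R : realType} {n : nat} {m : 'I_n -> nat}
  {scr : forall i : 'I_n, 'I_(m i) -> R}
  {P : forall i : 'I_n, 'M[R]_(m i)} {Q : 'M[R]_n}.
Hypothesis P_sym : forall i, (P i)^T = P i.
Hypothesis Q_sym : Q^T = Q.
Hypothesis SCR_mod_gt0 : forall i, 0 < SCR_mod P scr i.
Hypothesis BSCR_gt0 : 0 < BSCR P Q scr.

Lemma is_derive_SCR_mod_upd (i : 'I_n) (y : 'I_(m i)) (j : 'I_n) :
  is_derive (scr i y) 1 (fun t => SCR_mod P (upd scr y t) j)
    (if j == i then sf_marg (P i) (scr i) y else 0).
Proof.
rewrite /SCR_mod; have [->|ji] := eqVneq j i.
  apply: is_derive_eq.
    apply: (is_derive_sf_aggr_coord (P_sym i) (w := fun t => upd scr y t (j := i))).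
      exact: is_derive_upd.
    by rewrite /= upd_id; apply: SCR_mod_gt0.
  by rewrite /= upd_id mul1r.
under eq_fun do rewrite upd_other_block //.
exact: is_derive_cst.
Qed.

Lemma is_derive_BSCR_upd (i : 'I_n) (y : 'I_(m i)) :
  is_derive (scr i y) 1 (fun t => BSCR P Q (upd scr y t))
    (sf_marg (P i) (scr i) y * sf_marg Q (SCR_mod P scr) i).
Proof.
apply: is_derive_eq.
  apply: (is_derive_sf_aggr_coord Q_sym (w := fun t => SCR_mod P (upd scr y t))).
    exact: is_derive_SCR_mod_upd.
  by rewrite /= upd_id.
by rewrite /= upd_id.
Qed.

End Derivative.

Theorem theorem3 (R : realType) (n : nat) (m : 'I_n -> nat)
  (scr : forall i : 'I_n, 'I_(m i) -> R)
  (P : forall i : 'I_n, 'M[R]_(m i)) (Q : 'M[R]_n) :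
  (0 < n)%N ->
  (forall i, 0 < m i)%N ->
  (forall i y, 0 <= scr i y) ->
  (forall i, correlation_matrix (P i)) ->
  correlation_matrix Q ->
  (forall i, 0 < SCR_mod P scr i) ->
  0 < BSCR P Q scr ->
  let SCRi := SCR_mod P scr in
  let B := BSCR P Q scr in
  let AR := fun i : 'I_n => (\sum_(j < n) SCRi j * Q i j) / B in
  let ARs := fun (i : 'I_n) (y : 'I_(m i)) =>
               (\sum_(w < m i) scr i w * P i y w) / SCRi i in
  let SCRAi := fun (i : 'I_n) (y : 'I_(m i)) => scr i y * ARs i y in
  let SCRA := fun (i : 'I_n) (y : 'I_(m i)) => scr i y * dBSCR P Q scr y in
  (forall i (y : 'I_(m i)),
     derivable (fun t : R => BSCR P Q (upd scr y t)) (scr i y) 1) /\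
  B = \sum_(i < n) \sum_(y < m i) SCRA i y /\
  B = \sum_(i < n) \sum_(y < m i) scr i y * ARs i y * AR i /\
  B = \sum_(i < n) \sum_(y < m i) SCRAi i y * AR i /\
  (forall i (y : 'I_(m i)), SCRA i y = scr i y * ARs i y * AR i).
Proof.
move=> _ _ _ HP HQ SCR_gt0 B_gt0 SCRi B AR ARs SCRAi SCRA.
have P_sym i : (P i)^T = P i by case: (HP i).
have Q_sym : Q^T = Q by case: HQ.
have dB i y := is_derive_BSCR_upd P_sym Q_sym SCR_gt0 B_gt0 i y.
have SCRAE i y : SCRA i y = scr i y * ARs i y * AR i.
  by rewrite /SCRA /dBSCR derive1E derive_val mulrA.
have BE : B = \sum_(i < n) \sum_(y < m i) scr i y * ARs i y * AR i.
  under eq_bigr => i _ do rewrite -mulr_suml (sf_aggr_euler (SCR_gt0 i)).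
  by rewrite (sf_aggr_euler B_gt0).
split; first by move=> i y; case: (dB i y).
split; first by under eq_bigr do under eq_bigr do rewrite SCRAE.
by do !split.
Qed.
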